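(* Let $G=(V,E)$ be a connected planar graph with a fixed representation in the plane, let $G^\dagger$ be its dual graph, $p\in(0,1)$, $q\in\mathbb N$ and $p^*=\frac{q(1-p)}{p+q(1-p)}$. Let $\tilde P_{\rm HB}$ be the transition matrix of the heat-bath dynamics for the random-cluster model on $G$ with parameters $p,q$, and $\tilde P_{\rm HB}^\dagger$ that for the random-cluster model on $G^\dagger$ with parameters $p^*,q$. Then $\lambda(\tilde P_{\rm HB})=\lambda(\tilde P_{\rm HB}^\dagger)$.
   Context: Graphs are finite, parallel edges and loops allowed. A planar representation maps vertices to distinct points of $\mathbb R^2$ and edges to simple curves joining the images of their endvertices whose interiors are disjoint from all other curves. The dual graph $G^\dagger=(V^\dagger,E^\dagger)$ has one vertex in each face of the representation and, for each $e\in E$, one dual edge $e_\dagger$ whose curve crosses the curve of $e$ and no other curve, joining the vertices of the faces on both sides of $e$. For $A\subseteq E$, $c(A)$ is the number of connected components of $(V,A)$; RC measure $\mu(A)\propto(\tfrac{p}{1-p})^{|A|}q^{c(A)}$. Heat-bath dynamics: $\tilde P_{\rm HB}(A,B)=\frac1{|E|}\sum_{e\in E}\frac{\mu(B)}{\mu(A\cup\{e\})+\mu(A\setminus\{e\})}\mathbf 1(B\setminus\{e\}=A\setminus\{e\})$. Spectral gap: $\lambda(P)=1-\max\{|\xi|:\xi\text{ eigenvalue of }P,\ \xi\neq1\}$. *)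

From HB Require Import structures.
From mathcomp Require Import all_boot all_order all_algebra all_fingroup.
From mathcomp Require Import classical_sets reals.
From mathcomp Require Import complex.
Set Implicit Arguments. Unset Strict Implicit. Unset Printing Implicit Defensive.
Import Order.TTheory GRing.Theory Num.Theory.
Local Open Scope ring_scope.

(* Finite multigraphs (loops and parallel edges allowed):  vertex type V,   *)
(* edge type E, and ends e = the (unordered) pair of endvertices of e.      *)
Section RandomCluster.
Variables (R : realType) (V E : finType) (ends : E -> V * V).

Definition adjA (A : {set E}) : rel V := fun x y =>
  [exists e in A, (((ends e).1 == x) && ((ends e).2 == y))
                || (((ends e).1 == y) && ((ends e).2 == x))].

Definition ncomp (A : {set E}) : nat :=
  #|[set [set y | connect (adjA A) x y] | x : V]|.

Definition rc_weight (p : R) (q : nat) (A : {set E}) : R :=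
  (p / (1 - p)) ^+ #|A| * (q%:R) ^+ (ncomp A).

Definition rc_mu (p : R) (q : nat) (A : {set E}) : R :=
  rc_weight p q A / \sum_(B : {set E}) rc_weight p q B.

Definition hb (p : R) (q : nat) (A B : {set E}) : R :=
  (#|E|%:R)^-1 * \sum_(e : E)
     (if B :\ e == A :\ e then
        rc_mu p q B / (rc_mu p q (e |: A) + rc_mu p q (A :\ e))
      else 0).

Definition hb_mx (p : R) (q : nat) : 'M[R]_#|{set E}| :=
  \matrix_(i, j) hb p q (enum_val i) (enum_val j).

End RandomCluster.

Definition eigenvalues (R : realType) (n : nat) (M : 'M[R]_n) : set R[i] :=
  [set z | eigenvalue (map_mx (fun x : R => (x%:C)%C) M) z].

Definition spectral_gap (R : realType) (n : nat) (M : 'M[R]_n) : R :=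
  1 - sup [set ComplexField.Normc.normc z | z in [set z | eigenvalues M z /\ z <> 1]].

(* Planar representations as combinatorial maps.  Darts are E * bool, the  *)
(* two half-edges of e being (e,false) and (e,true); alpha exchanges them;  *)
(* sigma is the rotation system (cyclic order of the darts around each      *)
(* vertex); vertices are sigma-orbits, faces are orbits of phi = sigma o    *)
(* alpha.  The map is an embedding in the sphere/plane iff (for a connected *)
(* graph) Euler's formula  #V - #E + #F = 2  holds.                          *)
Section Maps.
Variable E : finType.

Definition flipd (d : E * bool) : E * bool := (d.1, ~~ d.2).
Lemma flipd_inj : injective flipd.
Proof. by apply: (can_inj (g := flipd)) => -[e b]; rewrite /flipd /= negbK. Qed.
Definition alpha : {perm E * bool} := perm flipd_inj.

Definition orb (T : finType) (s : {perm T}) := {X : {set T} | X \in porbits s}.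
Lemma orb_mem (T : finType) (s : {perm T}) (d : T) : porbit s d \in porbits s.
Proof. exact: imset_f. Qed.
Definition orb_of (T : finType) (s : {perm T}) (d : T) : orb s :=
  exist _ (porbit s d) (orb_mem s d).

Variable sigma : {perm E * bool}.

(* face permutation phi = sigma o alpha  (permM : (s * t) x = t (s x)) *)
Definition phi : {perm E * bool} := (alpha * sigma)%g.

Definition G_ends (e : E) : orb sigma * orb sigma :=
  (orb_of sigma (e, false), orb_of sigma (e, true)).

Definition dual_ends (e : E) : orb phi * orb phi :=
  (orb_of phi (e, false), orb_of phi (e, true)).

Definition map_connected : Prop := ncomp G_ends [set: E] = 1%N.

Definition map_planar : Prop :=
  (#|porbits sigma|%:Z - #|E|%:Z + #|porbits phi|%:Z = 2)%R.

End Maps.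

From HB Require Import structures.
From mathcomp Require Import all_boot all_order all_algebra all_fingroup.
From mathcomp Require Import classical_sets reals.
From mathcomp Require Import complex.
From mathcomp Require Import zify ring.
Set Implicit Arguments. Unset Strict Implicit. Unset Printing Implicit Defensive.
Import Order.TTheory GRing.Theory Num.Theory.

(* Complementation A |-> E \ A sends edge sets of G to edge sets of the dual
   G^dagger.  Euler's formula extends to the identity
     c^dagger(E \ A) + |V| = c(A) + |A| + 1   for every A:
   the defect c(A) + |A| - c^dagger(E \ A) cannot decrease when an edge e is added,
   because if e joins two components of A then its dual edge closes a cycle of
   the dual of E \ (A + e); and it equals |V| - 1 both at A = {} and at A = E,
   by connectivity of G and G^dagger and Euler's formula.  Since
   pstar/(1 - pstar) * p/(1 - p) = q, the identity gives mu^dagger(E \ A) = mu(A), so the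
   two heat-bath matrices are conjugate by the permutation matrix of
   complementation and have the same spectrum. *)

Section Components.
Variables (V E : finType) (ends : E -> V * V).
Local Notation adj := (adjA ends).

Lemma adjA_sym (A : {set E}) : symmetric (adj A).
Proof.
by move=> x y; apply/existsP/existsP => -[e /andP[eA H]]; exists e;
  rewrite eA /= orbC.
Qed.

Lemma connect_adjA_sym (A : {set E}) : connect_sym (adj A).
Proof. exact/sym_connect_sym/adjA_sym. Qed.

Lemma adjA_ends (A : {set E}) e : e \in A -> adj A (ends e).1 (ends e).2.
Proof. by move=> eA; apply/existsP; exists e; rewrite eA !eqxx. Qed.

Lemma connect_adjA_subset (A B : {set E}) x y :
  A \subset B -> connect (adj A) x y -> connect (adj B) x y.
Proof.
move=> AB; apply: connect_sub => u w /existsP[e /andP[eA uw]].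
by apply/connect1/existsP; exists e; rewrite (fintype.subsetP AB _ eA).
Qed.

Definition component (A : {set E}) x := [set y | connect (adj A) x y].

Lemma component_eq (A : {set E}) x y :
  connect (adj A) x y -> component A x = component A y.
Proof.
by move=> xy; apply/setP => z; rewrite !inE (same_connect (connect_adjA_sym A) xy).
Qed.

Lemma mem_component (A : {set E}) x : x \in component A x.
Proof. by rewrite inE connect0. Qed.

Lemma connect_setU1 (A : {set E}) e x y :
  let u := (ends e).1 in let v := (ends e).2 in
  connect (adj (e |: A)) x y =
  connect (adj A) x y ||
  ((connect (adj A) x u || connect (adj A) x v) &&
   (connect (adj A) y u || connect (adj A) y v)).
Proof.
move=> u v; have symA := connect_adjA_sym A.
have subA : A \subset e |: A by apply/fintype.subsetP => z zA; rewrite !inE zA orbT.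
apply/idP/idP.
  case/connectP => s path_s ->; elim: s x path_s => [|z s IH] x /=.
    by rewrite connect0.
  case/andP => /existsP[f /andP[]]; rewrite !inE => /orP[/eqP-> | fA] xz.
    rewrite /u /v; case/orP: xz => /andP[/eqP <- /eqP <-] /IH /orP[zw | /andP[_ ->]];
    by rewrite !connect0 /= ?orbT ?andbT // !(symA (last _ _)) zw ?orbT.
  have {}xz : adj A x z by apply/existsP; exists f; rewrite fA.
  case/IH/orP => [zw | /andP[zuv ->]].
    by rewrite (connect_trans (connect1 xz) zw).
  by case/orP: zuv => zt; rewrite (connect_trans (connect1 xz) zt) ?orbT.
case/orP => [xy | /andP[xuv yuv]]; first exact: connect_adjA_subset xy.
have symeA := connect_adjA_sym (e |: A).
have uv : connect (adj (e |: A)) u v by apply/connect1/adjA_ends; rewrite !inE eqxx.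
have vu : connect (adj (e |: A)) v u by rewrite symeA.
case/orP: xuv => /(connect_adjA_subset subA) xt;
  case/orP: yuv => /(connect_adjA_subset subA); rewrite symeA => ty;
  by [ apply: connect_trans xt ty | apply: connect_trans xt (connect_trans _ ty) ].
Qed.

Lemma ncomp_setU1_connect (A : {set E}) e :
  connect (adj A) (ends e).1 (ends e).2 -> ncomp ends (e |: A) = ncomp ends A.
Proof.
move=> uv; rewrite /ncomp; apply: (congr1 (fun S : {set {set V}} => #|S|)).
apply: eq_imset => x.
apply/setP => y; rewrite !inE connect_setU1.
have symA := connect_adjA_sym A.
have to_u z : connect (adj A) z (ends e).1 || connect (adj A) z (ends e).2 ->
              connect (adj A) z (ends e).1.
  by case/orP => // zv; rewrite symA in uv; apply: connect_trans zv uv.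
case: (boolP (connect (adj A) x y)) => //= xy; apply/negbTE/negP.
case/andP => /to_u xu /to_u yu; rewrite symA in yu.
by case/negP: xy; exact: connect_trans xu yu.
Qed.

Lemma ncomp_setU1_disconnect (A : {set E}) e :
  ~~ connect (adj A) (ends e).1 (ends e).2 ->
  (ncomp ends (e |: A)).+1 = ncomp ends A.
Proof.
set u := (ends e).1; set v := (ends e).2 => not_uv.
have symA := connect_adjA_sym A.
have subA : A \subset e |: A by apply/fintype.subsetP => z zA; rewrite !inE zA orbT.
pose merge (K : {set V}) := [set y | [exists x in K, connect (adj (e |: A)) x y]].
have merge_component x : merge (component A x) = component (e |: A) x.
  apply/setP => y; rewrite !inE; apply/existsP/idP => [[z /andP[]] | xy].
    by rewrite inE => /(connect_adjA_subset subA); apply: connect_trans.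
  by exists x; rewrite mem_component.
set C := [set component A x | x : V].
have uv_merged : merge (component A u) = merge (component A v).
  by rewrite !merge_component; apply/component_eq/connect1/adjA_ends; rewrite !inE eqxx.
have vC : component A v \in C by apply: imset_f.
have uC : component A u \in C :\ component A v.
  rewrite !inE imset_f // andbT; apply: contra not_uv => /eqP uv.
  by have := mem_component A v; rewrite -uv inE.
have -> : ncomp ends (e |: A) = #|merge @: (C :\ component A v)|.
  apply: (congr1 (fun S : {set {set V}} => #|S|)); apply/setP => K.
  apply/imsetP/imsetP => -[x xC ->]; last first.
    by move: xC; rewrite !inE => /andP[_ /imsetP[y _ ->]]; exists y.
  case: (eqVneq (component A x) (component A v)) => [xv | xv].
    by exists (component A u); rewrite // uv_merged -xv merge_component.
  by exists (component A x); rewrite ?merge_component // !inE xv imset_f.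
rewrite [ncomp _ _](cardsD1 (component A v) C) vC add1n; congr _.+1.
apply: card_in_imset => K L /setD1P[xv /imsetP[x _ Kx]] /setD1P[yv /imsetP[y _ Ly]].
subst K L; rewrite !merge_component => xy; apply: component_eq.
have : y \in component (e |: A) x by rewrite xy mem_component.
rewrite inE connect_setU1 -/u -/v => /orP[// | /andP[xuv yuv]].
have not_v z : component A z != component A v -> ~~ connect (adj A) z v.
  by apply: contra => zv; rewrite (component_eq zv).
have xu : connect (adj A) x u by case/orP: xuv => // xv'; case/negP: (not_v _ xv).
have yu : connect (adj A) y u by case/orP: yuv => // yv'; case/negP: (not_v _ yv).
by rewrite symA in yu; apply: connect_trans xu yu.
Qed.

Lemma ncomp_leq_setU1 (A : {set E}) e : (ncomp ends A <= (ncomp ends (e |: A)).+1)%N.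
Proof.
case: (boolP (connect (adj A) (ends e).1 (ends e).2)) => uv.
  by rewrite (ncomp_setU1_connect uv).
by rewrite -(ncomp_setU1_disconnect uv).
Qed.

Lemma ncomp_set0 : ncomp ends finset.set0 = #|V|.
Proof.
rewrite /ncomp -[in RHS](card_imset _ set1_inj).
apply: (congr1 (fun S : {set {set V}} => #|S|)).
apply: eq_imset => x; apply/setP => y; rewrite !inE.
apply/idP/eqP => [/connectP[[|z s] /= xs ->] | <-]; rewrite ?connect0 //.
by case/andP: xs => /existsP[f]; rewrite inE.
Qed.

Lemma ncomp_eq1 (A : {set E}) (x0 : V) :
  ncomp ends A = 1%N <-> forall x y, connect (adj A) x y.
Proof.
split => [/eqP/cards1P[K CK] x y | conn].
  have xK : component A x \in [set K] by rewrite -CK imset_f.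
  have yK : component A y \in [set K] by rewrite -CK imset_f.
  rewrite !inE in xK yK; have := mem_component A y.
  by rewrite (eqP yK) -(eqP xK) inE.
apply/eqP/cards1P; exists (component A x0); apply/setP => K; rewrite inE.
by apply/imsetP/eqP => [[x _ ->] | ->]; [apply: component_eq | exists x0].
Qed.

End Components.

Lemma homo_subset_setU1 (T : finType) (d : Order.disp_t) (U : porderType d)
    (f : {set T} -> U) :
  (forall (A : {set T}) x, x \notin A -> (f A <= f (x |: A))%O) ->
  {homo f : A B / A \subset B >-> (A <= B)%O}.
Proof.
move=> f_step A B; move Hn : #|B :\: A| => n; elim: n A Hn => [|n IH] A Hn AB.
  have BA : B \subset A by rewrite -finset.setD_eq0 -cards_eq0 Hn.
  by have -> : A = B by apply/eqP; rewrite finset.eqEsubset AB.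
have [x xBA] : exists x, x \in B :\: A by apply/card_gt0P; rewrite Hn.
move: (xBA); rewrite inE => /andP[xA xB].
apply: Order.POrderTheory.le_trans (f_step _ _ xA) (IH _ _ _).
  by move: Hn; rewrite (cardsD1 x) xBA add1n finset.setDDl finset.setUC => -[].
by rewrite finset.subUset finset.sub1set xB AB.
Qed.

Section Orbits.
Variables (T : finType) (s : {perm T}).

Lemma orb_of_perm x : orb_of s (s x) = orb_of s x.
Proof. by apply: val_inj => /=; have := porbit_perm s 1 x; rewrite expg1. Qed.

Lemma orb_of_eq_exp x y : orb_of s x = orb_of s y -> exists i, y = (s ^+ i)%g x.
Proof. by move=> /(congr1 val) /= xy; apply/porbitP; rewrite xy porbit_id. Qed.

Lemma orb_of_surj (X : orb s) : exists x, X = orb_of s x.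
Proof. by case: X => X /[dup] /imsetP[x _ ->] Xs; exists x; apply: val_inj. Qed.

Lemma card_orb : #|{: orb s}| = #|porbits s|.
Proof. by rewrite card_sig; apply: eq_card. Qed.

End Orbits.

Lemma boundary_balance (T : finType) (f : {perm T}) (g : T -> T) (X P : pred T) :
  involutive g -> (forall x, X (f x) = X x) -> (forall x, P (f x) = P (g x)) ->
  \sum_x (X x && P x && ~~ P (g x)) = \sum_x (X (g x) && P x && ~~ P (g x)).
Proof.
move=> gK Xf Pf.
have split_by (Q R : pred T) :
    \sum_x (X x && Q x) = \sum_x (X x && Q x && R x) + \sum_x (X x && Q x && ~~ R x).
  by rewrite -big_split; apply: eq_bigr => x _; case: (X x); case: (Q x); case: (R x).
have XP_XPg : \sum_x (X x && P x) = \sum_x (X x && P (g x)).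
  by rewrite (reindex_inj (@perm_inj _ f)); apply: eq_bigr => x _; rewrite Xf Pf.
have enter : \sum_x (X x && P (g x) && ~~ P x) = \sum_x (X (g x) && P x && ~~ P (g x)).
  by rewrite (reindex_inj (can_inj gK)); apply: eq_bigr => x _; rewrite gK andbAC.
rewrite -enter; move: XP_XPg; rewrite (split_by P (P \o g)) (split_by (P \o g) P) /=.
have -> : \sum_x (X x && P (g x) && P x) = \sum_x (X x && P x && P (g x)).
  by apply: eq_bigr => x _; rewrite andbAC.
exact: addnI.
Qed.

Section CombinatorialMap.
Variable E : finType.
Local Notation D := (E * bool)%type.
Local Notation al := (alpha E).

Lemma alphaE (d : D) : al d = (d.1, ~~ d.2).
Proof. by rewrite permE. Qed.

Lemma alphaK : involutive al.
Proof. by case=> e b; rewrite !alphaE /= negbK. Qed.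

Lemma phiE (s : {perm D}) d : phi s d = s (al d).
Proof. by rewrite permM. Qed.

Lemma dual_endsE (s : {perm D}) : dual_ends s = G_ends (phi s).
Proof. by []. Qed.

Lemma adjA_G_ends_alpha (s : {perm D}) (A : {set E}) (d : D) :
  d.1 \in A -> adjA (G_ends s) A (orb_of s d) (orb_of s (al d)).
Proof.
case: d => e b /= eA; rewrite alphaE /=; apply/existsP; exists e.
by rewrite eA /=; case: b; rewrite !eqxx ?orbT.
Qed.

Lemma adjA_G_endsP (s : {perm D}) (A : {set E}) x y :
  adjA (G_ends s) A x y ->
  exists2 d : D, d.1 \in A & x = orb_of s d /\ y = orb_of s (al d).
Proof.
case/existsP => e /andP[eA] /orP[] /andP[/eqP <- /eqP <-].
  by exists (e, false); rewrite ?alphaE.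
by exists (e, true); rewrite ?alphaE.
Qed.

Variable sigma : {perm D}.
Local Notation vert := (orb_of sigma).
Local Notation face := (orb_of (phi sigma)).
Local Notation G := (G_ends sigma).
Local Notation Gd := (dual_ends sigma).

Lemma vert_phi d : vert (phi sigma d) = vert (al d).
Proof. by rewrite phiE orb_of_perm. Qed.

Lemma face_phi d : face (phi sigma d) = face d.
Proof. exact: orb_of_perm. Qed.

(* The darts whose face is in the component X of face (e,false) in the dual of
   ~: A :\ e form a phi-stable set, so as many of them leave the component P of
   vert (e,false) in A as enter it.  A leaving dart d <> (e,false) is matched
   with its reverse through the dual edge of d.1 in ~: A :\ e; if face (e,true)
   were outside X, the leaving dart (e,false) would stay unmatched. *)
Lemma dual_connect_of_bridge (A : {set E}) e :
  ~~ connect (adjA G A) (vert (e, false)) (vert (e, true)) ->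
  connect (adjA Gd (~: A :\ e)) (face (e, false)) (face (e, true)).
Proof.
move=> not_uv; apply/negPn/negP => not_dual.
set T := ~: A :\ e.
pose P (d : D) := connect (adjA G A) (vert (e, false)) (vert d).
pose X (d : D) := connect (adjA Gd T) (face (e, false)) (face d).
have X_phi d : X (phi sigma d) = X d by rewrite /X face_phi.
have P_phi d : P (phi sigma d) = P (al d) by rewrite /P vert_phi.
have := boundary_balance alphaK X_phi P_phi.
rewrite (bigD1 (e, false)) // [in RHS](bigD1 (e, false)) //= alphaE /=.
rewrite /X connect0 (negbTE not_dual) /P connect0 (negbTE not_uv) -/P -/X add1n add0n.
set L := \sum_(d | _) _; set L' := \sum_(d | _) _.
suff -> : L = L' by move=> /esym/n_Sn.
apply: eq_bigr => d d_neq.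
case: (boolP (P d && ~~ P (al d))) => [/andP[Pd nPd] | ]; last first.
  by move=> /negbTE leave; rewrite -!andbA leave !andbF.
have dT : d.1 \in T.
  rewrite !inE; apply/andP; split.
    case: d d_neq Pd {nPd} => f b /= d_neq Pd; apply: contra not_uv => /eqP fe.
    by subst f; case: b d_neq Pd => //; rewrite eqxx.
  apply: contra nPd => dA.
  exact: connect_trans Pd (connect1 (adjA_G_ends_alpha _ dA)).
have dd : adjA Gd T (face d) (face (al d)) by exact: (adjA_G_ends_alpha _ dT).
by rewrite /X (same_connect1r (connect_adjA_sym Gd T) dd).
Qed.

Lemma face_connect_alpha d : connect (adjA Gd [set: E]) (face d) (face (al d)).
Proof. by apply: connect1; rewrite dual_endsE; apply: adjA_G_ends_alpha; rewrite inE. Qed.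

Lemma face_connect_vert d d' :
  vert d = vert d' -> connect (adjA Gd [set: E]) (face d) (face d').
Proof.
move=> /orb_of_eq_exp[i ->]; elim: i => [|i IH]; first by rewrite expg0 perm1 connect0.
rewrite expgSr permM; apply: connect_trans IH _; set x := (sigma ^+ i)%g d.
by rewrite -[x in sigma x]alphaK -phiE face_phi face_connect_alpha.
Qed.

Lemma face_connect_of_vert_connect d y :
  connect (adjA G [set: E]) (vert d) y ->
  exists2 d', vert d' = y & connect (adjA Gd [set: E]) (face d) (face d').
Proof.
case/connectP => s path_s ->; elim: s d path_s => [|z s IH] d /=.
  by exists d; rewrite ?connect0.
case/andP => /adjA_G_endsP[d1 _ [dd1 ->]] /IH[d' vd' d1d'].
exists d' => //; apply: connect_trans (face_connect_vert dd1) _.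
exact: connect_trans (face_connect_alpha d1) d1d'.
Qed.

Lemma dual_connected : map_connected sigma -> ncomp Gd [set: E] = 1%N.
Proof.
move=> conn; have [x0 _] : exists x0 : orb sigma, True.
  move: (conn) => /eqP/cards1P[K /setP/(_ K)].
  by rewrite !inE eqxx => /imsetP[x _ _]; exists x.
have [d0 _] := orb_of_surj x0; apply/(ncomp_eq1 _ _ (face d0)) => F1 F2.
have [d1 ->] := orb_of_surj F1; have [d2 ->] := orb_of_surj F2.
have vert_conn := (ncomp_eq1 _ _ x0).1 conn (vert d1) (vert d2).
have [d' vd' d1d'] := face_connect_of_vert_connect vert_conn.
exact: connect_trans d1d' (face_connect_vert vd').
Qed.

Definition euler_defect (A : {set E}) : int :=
  ((ncomp G A)%:Z + #|A|%:Z - (ncomp Gd (~: A))%:Z)%R.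

Lemma euler_defect_setU1 (A : {set E}) e :
  e \notin A -> (euler_defect A <= euler_defect (e |: A))%R.
Proof.
move=> eA; rewrite /euler_defect.
set T := ~: A :\ e.
have -> : ~: A = e |: T by rewrite finset.setD1K // inE.
have -> : ~: (e |: A) = T by apply/setP => f; rewrite !inE negb_or andbC.
rewrite cardsU1 (negbTE eA) add1n.
have := ncomp_leq_setU1 Gd T e.
case: (boolP (connect (adjA G A) (G e).1 (G e).2)) => uv.
  by rewrite (ncomp_setU1_connect uv); lia.
rewrite (ncomp_setU1_connect (dual_connect_of_bridge uv)).
by rewrite -(ncomp_setU1_disconnect uv) -/T; lia.
Qed.

Lemma ncomp_dual_setC (A : {set E}) :
  map_connected sigma -> map_planar sigma ->
  (ncomp Gd (~: A) + #|porbits sigma| = ncomp G A + #|A| + 1)%N.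
Proof.
move=> conn planar.
have mono := homo_subset_setU1 euler_defect_setU1.
have defect0 : euler_defect finset.set0 = (#|porbits sigma|%:Z - 1)%R.
  rewrite /euler_defect ncomp_set0 finset.setC0 (dual_connected conn) cards0 card_orb; lia.
have defectT : euler_defect [set: E] = (#|porbits sigma|%:Z - 1)%R.
  rewrite /euler_defect conn finset.setCT ncomp_set0 cardsT card_orb.
  by move: planar; rewrite /map_planar; lia.
have : euler_defect A = (#|porbits sigma|%:Z - 1)%R.
  apply/eqP; rewrite Order.POrderTheory.eq_le -{1}defectT -defect0.
  by rewrite !mono ?finset.subsetT ?finset.sub0set.
rewrite /euler_defect; lia.
Qed.

End CombinatorialMap.

Local Open Scope ring_scope.

Lemma dual_odds (F : realFieldType) (p q : F) :
  0 < p < 1 -> 0 < q ->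
  let pstar := q * (1 - p) / (p + q * (1 - p)) in
  pstar / (1 - pstar) * (p / (1 - p)) = q.
Proof.
move=> /andP[p_gt0 p_lt1] q_gt0 pstar.
have p1_neq0 : 1 - p != 0 by rewrite subr_eq0 gt_eqF.
have den_neq0 : p + q * (1 - p) != 0.
  by rewrite gt_eqF // addr_gt0 // mulr_gt0 // subr_gt0.
have -> : 1 - pstar = p / (p + q * (1 - p)) by rewrite /pstar; field.
by rewrite /pstar; field; rewrite p1_neq0 den_neq0 gt_eqF.
Qed.

Section ComplementDuality.
Variables (R : realType) (E V1 V2 : finType).
Variables (ends1 : E -> V1 * V1) (ends2 : E -> V2 * V2) (p1 p2 : R) (q k : nat).
Hypothesis q_gt0 : (0 < q)%N.
Hypothesis odds_mul : p2 / (1 - p2) * (p1 / (1 - p1)) = q%:R.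
Hypothesis ncomp_setC :
  forall A : {set E}, (ncomp ends2 (~: A) + k = ncomp ends1 A + #|A| + 1)%N.

Local Notation a := (p1 / (1 - p1)).

Lemma rc_weight_setC (A : {set E}) :
  rc_weight ends2 p2 q (~: A) * (a ^+ #|E| * q%:R ^+ k)
  = rc_weight ends1 p1 q A * q%:R ^+ (#|E| + 1).
Proof.
rewrite /rc_weight -(cardsC A) !exprD.
have q_pow : q%:R ^+ ncomp ends2 (~: A) * q%:R ^+ k
           = q%:R ^+ ncomp ends1 A * q%:R ^+ #|A| * q%:R ^+ 1 :> R.
  by rewrite -!exprD ncomp_setC.
set r := p2 / (1 - p2).
transitivity ((r ^+ #|~: A| * a ^+ #|~: A|) * a ^+ #|A|
              * (q%:R ^+ ncomp ends2 (~: A) * q%:R ^+ k)).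
  move: (r ^+ _) (a ^+ #|~: A|) (a ^+ #|A|) (q%:R ^+ _) (q%:R ^+ k) => x1 x2 x3 x4 x5.
  ring.
rewrite -exprMn odds_mul q_pow.
move: (q%:R ^+ #|~: A|) (a ^+ #|A|) (q%:R ^+ _) (q%:R ^+ #|A|) (q%:R ^+ 1).
by move=> x1 x2 x3 x4 x5; ring.
Qed.

Lemma rc_mu_setC (A : {set E}) : rc_mu ends2 p2 q (~: A) = rc_mu ends1 p1 q A.
Proof.
have q_neq0 : q%:R != 0 :> R by rewrite pnatr_eq0 -lt0n.
have a_neq0 : a != 0 by apply: contra_neq q_neq0 => a0; rewrite -odds_mul a0 mulr0.
set W := a ^+ #|E| * q%:R ^+ k.
have W_neq0 : W != 0 by rewrite mulf_neq0 // expf_neq0.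
set c := q%:R ^+ (#|E| + 1) / W.
have c_neq0 : c != 0 by rewrite mulf_neq0 ?invr_eq0 // expf_neq0.
have weightC B : rc_weight ends2 p2 q (~: B) = rc_weight ends1 p1 q B * c.
  by apply: (mulIf W_neq0); rewrite rc_weight_setC /c -[RHS]mulrA divfK.
rewrite /rc_mu weightC.
have -> : \sum_(B : {set E}) rc_weight ends2 p2 q B
        = (\sum_(B : {set E}) rc_weight ends1 p1 q B) * c.
  rewrite (reindex_inj (@finset.setC_inj E)) mulr_suml.
  by apply: eq_bigr => B _; rewrite weightC.
by rewrite invfM mulrACA divff // mulr1.
Qed.

End ComplementDuality.

Lemma hb_setC (R : realType) (E V1 V2 : finType)
    (ends1 : E -> V1 * V1) (ends2 : E -> V2 * V2) (p1 p2 : R) (q : nat) :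
  (forall A, rc_mu ends2 p2 q (~: A) = rc_mu ends1 p1 q A) ->
  forall A B, hb ends2 p2 q (~: A) (~: B) = hb ends1 p1 q A B.
Proof.
move=> muC A B; rewrite /hb; congr (_ * _); apply: eq_bigr => e _.
have setCD1 (C : {set E}) : ~: C :\ e = ~: (e |: C).
  by apply/setP => x; rewrite !inE negb_or andbC.
have setU1C : e |: ~: A = ~: (A :\ e).
  by apply/setP => x; rewrite !inE negb_and negbK.
have eq_setD1 : (e |: B == e |: A) = (B :\ e == A :\ e).
  by apply/eqP/eqP => /setP BA; apply/setP => x;
    move: (BA x); rewrite !inE; case: eqP.
by rewrite !setCD1 setU1C (inj_eq (@finset.setC_inj E)) eq_setD1 !muC addrC.
Qed.

Lemma eigenvalue_similar_sub (F : fieldType) n (A P Q : 'M[F]_n) :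
  P *m Q = 1%:M -> Q *m P = 1%:M -> {subset eigenvalue (P *m A *m Q) <= eigenvalue A}.
Proof.
move=> PQ QP a /eigenvalueP[v Av v_neq0]; apply/eigenvalueP; exists (v *m P).
  have : v *m (P *m A *m Q) *m P = a *: v *m P by rewrite Av.
  by rewrite -scalemxAl !mulmxA -!(mulmxA _ Q) QP !mulmx1.
by apply: contraNneq v_neq0 => vP0; rewrite -[v]mulmx1 -PQ mulmxA vP0 mul0mx.
Qed.

Lemma eigenvalue_row_col_perm (F : fieldType) n (s : 'S_n) (A : 'M[F]_n) :
  eigenvalue (col_perm s (row_perm s A)) =1 eigenvalue A.
Proof.
move=> a; rewrite col_permE row_permE.
have PQ : perm_mx s *m perm_mx s^-1 = 1%:M :> 'M[F]_n by rewrite -perm_mxM mulgV perm_mx1.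
have QP : perm_mx s^-1 *m perm_mx s = 1%:M :> 'M[F]_n by rewrite -perm_mxM mulVg perm_mx1.
apply/idP/idP; first exact: eigenvalue_similar_sub.
move=> Aa; apply: (eigenvalue_similar_sub QP PQ).
by rewrite !mulmxA QP mul1mx -mulmxA QP mulmx1.
Qed.

Lemma spectral_gap_row_col_perm (R : realType) n (s : 'S_n) (A : 'M[R]_n) :
  spectral_gap (col_perm s (row_perm s A)) = spectral_gap A.
Proof.
rewrite /spectral_gap.
suff -> : eigenvalues (col_perm s (row_perm s A)) = eigenvalues A by [].
apply: boolp.funext => z.
by rewrite /eigenvalues /mkset map_col_perm map_row_perm eigenvalue_row_col_perm.
Qed.

Section SetComplementPerm.
Variable E : finType.

Definition setC_ord (i : 'I_#|{set E}|) := enum_rank (~: enum_val i).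

Lemma setC_ord_inj : injective setC_ord.
Proof.
by move=> i j /(congr1 enum_val); rewrite !enum_rankK => /finset.setC_inj/enum_val_inj.
Qed.

Definition setC_perm : 'S_#|{set E}| := perm setC_ord_inj.

Lemma hb_mx_setC (R : realType) (V1 V2 : finType)
    (ends1 : E -> V1 * V1) (ends2 : E -> V2 * V2) (p1 p2 : R) (q : nat) :
  (forall A B, hb ends2 p2 q (~: A) (~: B) = hb ends1 p1 q A B) ->
  hb_mx ends2 p2 q = col_perm setC_perm (row_perm setC_perm (hb_mx ends1 p1 q)).
Proof.
move=> hbC; apply/matrixP => i j; rewrite !mxE !permE /setC_ord !enum_rankK.
by rewrite -hbC !finset.setCK.
Qed.

End SetComplementPerm.

Theorem lemma5p5 (R : realType) (E : finType) (sigma : {perm E * bool})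
    (p : R) (q : nat) :
  map_connected sigma -> map_planar sigma ->
  0 < p < 1 -> (0 < q)%N ->
  let pstar := q%:R * (1 - p) / (p + q%:R * (1 - p)) in
  spectral_gap (hb_mx (G_ends sigma) p q)
  = spectral_gap (hb_mx (dual_ends sigma) pstar q).
Proof.
move=> conn planar p01 q_gt0 pstar.
have odds : pstar / (1 - pstar) * (p / (1 - p)) = q%:R.
  by apply: dual_odds; rewrite ?ltr0n.
have muC := rc_mu_setC q_gt0 odds (fun A => ncomp_dual_setC A conn planar).
by rewrite (hb_mx_setC (hb_setC muC)) spectral_gap_row_col_perm.
Qed.
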